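(* If $n\ge3$, then $\ker(\theta)\le FVP_n\cap FH_n$.
   Context: $FVB_n$ is the flat virtual braid group: generators $\sigma_1,\dots,\sigma_{n-1},\rho_1,\dots,\rho_{n-1}$, relations $\sigma_i\sigma_j=\sigma_j\sigma_i$, $\rho_i\rho_j=\rho_j\rho_i$, $\sigma_i\rho_j=\rho_j\sigma_i$ for $|i-j|\ge2$; $\sigma_i\sigma_{i+1}\sigma_i=\sigma_{i+1}\sigma_i\sigma_{i+1}$; $\rho_i\rho_{i+1}\rho_i=\rho_{i+1}\rho_i\rho_{i+1}$; $\rho_i\rho_{i+1}\sigma_i=\sigma_{i+1}\rho_i\rho_{i+1}$; $\rho_i^2=\sigma_i^2=1$. Let $\iota_1:FVB_n\to S_n$ send both $\sigma_i$ and $\rho_i$ to the transposition $(i,i+1)$, and $\iota_2:FVB_n\to S_n$ send $\sigma_i$ to $1$ and $\rho_i$ to $(i,i+1)$; $FVP_n=\ker\iota_1$ and $FH_n=\ker\iota_2$. $F_{2n}$ is free on $x_1,\dots,x_n,y_1,\dots,y_n$ and $\theta:FVB_n\to{\rm Aut}(F_{2n})$ is the homomorphism with $\theta(\sigma_i):x_i\mapsto x_{i+1}y_{i+1},\ x_{i+1}\mapsto x_iy_{i+1}^{-1}$ and $\theta(\rho_i):x_i\leftrightarrow x_{i+1},\ y_i\leftrightarrow y_{i+1}$, other generators fixed; automorphisms compose on the right, $(fg)(x)=g(f(x))$. *)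

From mathcomp Require Import all_boot all_fingroup.
Set Implicit Arguments. Unset Strict Implicit. Unset Printing Implicit Defensive.

(* ---------- Generators of FVB_n (0-based indices) ----------
   Sig i stands for sigma_{i+1}, Rho i for rho_{i+1}; valid for i+1 < n.
   Since every generator is an involution in FVB_n, every element of FVB_n
   is represented by a positive word (a list of generators). *)
Inductive gen := Sig of nat | Rho of nat.

Definition gen_idx (g : gen) : nat := match g with Sig i => i | Rho i => i end.
Definition is_rho (g : gen) : bool := match g with Rho _ => true | Sig _ => false end.
Definition valid_gen (n : nat) (g : gen) : bool := (gen_idx g).+1 < n.

(* ---------- The free group F_{2n} ----------
   A letter is (b, j): b = false means x_{j+1}, b = true means y_{j+1}.
   A signed letter is (letter, e) with e = true for the letter, false for
   its inverse.  Group elements are represented by freely reduced words. *)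
Definition letter := (bool * nat)%type.
Definition sletter := (letter * bool)%type.

Definition sinv (a : sletter) : sletter := (a.1, ~~ a.2).

Definition freduce (s : seq sletter) : seq sletter :=
  foldr (fun a acc => match acc with
                      | b :: t => if b == sinv a then t else a :: acc
                      | [::] => [:: a] end) [::] s.

Definition fsubst (f : letter -> seq sletter) (w : seq sletter) : seq sletter :=
  freduce (flatten (map (fun a => if a.2 then f a.1 else rev (map sinv (f a.1))) w)).

Definition swapn (i j : nat) : nat :=
  if j == i then i.+1 else if j == i.+1 then i else j.

Definition theta_gen (g : gen) : letter -> seq sletter :=
  match g with
  | Sig i => fun l =>
      if ~~ l.1 && (l.2 == i) then [:: ((false, i.+1), true); ((true, i.+1), true)]
      else if ~~ l.1 && (l.2 == i.+1) then [:: ((false, i), true); ((true, i.+1), false)]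
      else [:: (l, true)]
  | Rho i => fun l => [:: ((l.1, swapn i l.2), true)]
  end.

(* theta(w)(v): automorphisms compose on the right, (fg)(x) = g(f(x)),
   so the automorphism of the first letter of w is applied first. *)
Definition theta_apply (w : seq gen) (v : seq sletter) : seq sletter :=
  foldl (fun v g => fsubst (theta_gen g) v) v w.

Definition in_ker_theta (n : nat) (w : seq gen) : Prop :=
  forall l : letter, l.2 < n -> theta_apply w [:: (l, true)] = [:: (l, true)].

(* transposition (i+1, i+2) (1-based) in S_n = {perm 'I_n} *)
Definition transp (n i : nat) : {perm 'I_n} :=
  match @insub _ (fun k => k < n) _ i, @insub _ (fun k => k < n) _ i.+1 with
  | Some a, Some b => tperm a b
  | _, _ => 1%g
  end.

Definition iota1 (n : nat) (w : seq gen) : {perm 'I_n} :=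
  (\prod_(g <- w) transp n (gen_idx g))%g.

Definition iota2 (n : nat) (w : seq gen) : {perm 'I_n} :=
  (\prod_(g <- w | is_rho g) transp n (gen_idx g))%g.

(* The
   letters y_j are permuted by theta exactly as iota_2 permutes the indices,
   so an element of ker theta fixes every y_j and lies in FH_n.  For FVP_n,
   pass to the abelianisation of F_{2n}: the exponent sum of x_k in theta(w)(v)
   equals the exponent sum of x_{k'} in v, where k |-> k' is the permutation
   iota_1(w)^-1.  If theta(w) fixes x_k, then k' = k for every k. *)
From mathcomp Require Import all_boot all_fingroup.
From mathcomp Require Import ssralg ssrint zify.
Import GRing.Theory.

Set Implicit Arguments.
Unset Strict Implicit.

Section ExponentSum.
Local Open Scope ring_scope.
Variables (V : zmodType) (f : letter -> V).

Definition sweight (a : sletter) : V := if a.2 then f a.1 else - f a.1.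

Definition weight (s : seq sletter) : V := \sum_(a <- s) sweight a.

Lemma weight_cat s t : weight (s ++ t) = weight s + weight t.
Proof. by rewrite /weight big_cat. Qed.

Lemma weight_nil : weight [::] = 0.
Proof. exact: big_nil. Qed.

Lemma weight_cons a s : weight (a :: s) = sweight a + weight s.
Proof. by rewrite /weight big_cons. Qed.

Lemma weight_letter l : weight [:: (l, true)] = f l.
Proof. by rewrite /weight big_seq1. Qed.

Lemma sweight_sinv a : sweight (sinv a) = - sweight a.
Proof. by rewrite /sweight /sinv /=; case: a.2; rewrite ?opprK. Qed.

Lemma weight_inv s : weight (rev (map sinv s)) = - weight s.
Proof.
by rewrite /weight big_rev big_map -sumrN; apply: eq_bigr => a _; rewrite sweight_sinv.
Qed.

Lemma weight_freduce s : weight (freduce s) = weight s.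
Proof.
elim: s => [|a s IH] //=; rewrite weight_cons -{}IH.
case: (freduce s) => [|c u]; first by rewrite weight_cons.
case: eqP => [->|_] /=; last by rewrite !weight_cons.
by rewrite weight_cons sweight_sinv addrA addrN add0r.
Qed.

End ExponentSum.

Lemma weight_fsubst (V : zmodType) (f : letter -> V) h v :
  weight f (fsubst h v) = weight (fun l => weight f (h l)) v.
Proof.
rewrite /fsubst weight_freduce; elim: v => [|a v IH] /=; first by rewrite !weight_nil.
rewrite weight_cat IH weight_cons /sweight.
by case: a.2; rewrite ?weight_inv.
Qed.

Lemma swapnK i : involutive (swapn i).
Proof. by move=> k; rewrite /swapn; do ![case: eqP => //=]; lia. Qed.

Lemma swapn_eq i a b : (swapn i a == b) = (a == swapn i b).
Proof. by apply/eqP/eqP => [<-|->]; rewrite swapnK. Qed.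

Definition swaps (P : pred gen) (w : seq gen) (k : nat) : nat :=
  foldl (fun k g => if P g then swapn (gen_idx g) k else k) k w.

Lemma swaps_rcons P w g k :
  swaps P (rcons w g) k = if P g then swapn (gen_idx g) (swaps P w k) else swaps P w k.
Proof. by rewrite /swaps foldl_rcons. Qed.

Lemma swaps_revK P w : cancel (swaps P (rev w)) (swaps P w).
Proof.
elim: w => [|g w IH] k //; rewrite rev_cons swaps_rcons /=.
by case: (P g); rewrite ?swapnK IH.
Qed.

Definition xcount (k : nat) (l : letter) : int := if l == (false, k) then 1 else 0.

Lemma xcount_theta_gen g k l :
  weight (xcount k) (theta_gen g l) = xcount (swapn (gen_idx g) k) l.
Proof.
case: g l => i [[] m] /=; rewrite ?weight_letter /xcount ?xpair_eqE ?swapn_eq //.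
rewrite /swapn; case: eqP => [->|ne_mi]; [|case: eqP => [->|ne_mi1]];
  rewrite ?weight_cons ?weight_nil ?weight_letter /sweight /= ?xpair_eqE /=;
  by do ![case: eqP]; lia.
Qed.

Lemma xcount_theta_apply w k v :
  weight (xcount k) (theta_apply w v) = weight (xcount (swaps xpredT (rev w) k)) v.
Proof.
elim: w k v => [|g w IH] k v //=.
rewrite IH weight_fsubst rev_cons swaps_rcons /=.
by apply: eq_bigr => a _; rewrite /sweight xcount_theta_gen.
Qed.

Lemma theta_apply_y w j :
  theta_apply w [:: ((true, j), true)] = [:: ((true, swaps is_rho w j), true)].
Proof. by elim: w j => [|[] i w IH] j //=; rewrite IH. Qed.

Lemma transp_val n i (a : 'I_n) : i.+1 < n -> val (transp n i a) = swapn i (val a).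
Proof.
move=> lt_i1n; have lt_in := ltn_trans (ltnSn i) lt_i1n.
rewrite /transp (insubT (fun k => k < n) lt_in) (insubT (fun k => k < n) lt_i1n) /swapn.
case: tpermP => [->|->|ne_ai ne_ai1] /=; rewrite ?eqxx ?(gtn_eqF (ltnSn i)) //.
case: eqP => [eq_ai|_]; first by case: ne_ai; apply: val_inj.
by case: eqP => [eq_ai1|//]; case: ne_ai1; apply: val_inj.
Qed.

Lemma prod_transp_val n (P : pred gen) w (j : 'I_n) : all (valid_gen n) w ->
  val ((\prod_(g <- w | P g) transp n (gen_idx g))%g j) = swaps P w (val j).
Proof.
elim: w j => [|g w IH] j /=; first by rewrite big_nil perm1.
case/andP=> valid_g valid_w; rewrite big_cons.
by case: (P g); rewrite ?permM IH // transp_val.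
Qed.

Theorem proposition9 (n : nat) (w : seq gen) :
  3 <= n -> all (valid_gen n) w -> in_ker_theta n w ->
  iota1 n w = 1%g /\ iota2 n w = 1%g.
Proof.
move=> _ valid_w ker_w; split; apply/permP => j; rewrite perm1; apply: val_inj.
- rewrite [LHS](prod_transp_val xpredT) //.
  have := congr1 (weight (xcount j)) (ker_w (false, val j) (ltn_ord j)).
  rewrite xcount_theta_apply !weight_letter /xcount !xpair_eqE !eqxx /=.
  by case: eqP => [fix_j _|//]; rewrite {1}fix_j swaps_revK.
- rewrite [LHS](prod_transp_val is_rho) //.
  by have := ker_w (true, val j) (ltn_ord j); rewrite theta_apply_y => -[].
Qed.
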